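(* Let $A\in\mathbb{R}^{n\times n}$ be nonsingular with $\rho(|A^{-1}|)<1/3$. Then for every $b\in\mathbb{R}^n$ and every starting vector $x^0\in\mathbb{R}^n$, the generalized Newton method $x^{k+1}=(A-D(x^k))^{-1}b$ is well defined for all $k\ge 0$ (each $A-D(x^k)$ is nonsingular), and the sequence $\{x^k\}$ converges to the unique solution $x^*$ of $Ax-|x|=b$.
   Context: For a matrix $M=[m_{ij}]$, $|M|=[|m_{ij}|]$ is the entrywise absolute value; for a vector $x$, $|x|$ is the componentwise absolute value. $\rho(\cdot)$ is the spectral radius. $\mathrm{sign}(x)$ is the vector whose components are $1,0,-1$ according as the corresponding component of $x$ is positive, zero, negative, and $D(x)=\mathrm{diag}(\mathrm{sign}(x))$. The generalized Newton method for $Ax-|x|=b$ is the iteration $x^{k+1}=(A-D(x^k))^{-1}b$ from a given $x^0$. *)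

From HB Require Import structures.
From mathcomp Require Import all_boot all_order all_algebra.
From mathcomp Require Import all_classical all_reals all_analysis.
From mathcomp Require complex.
Import complex.ComplexField.
Set Implicit Arguments. Unset Strict Implicit. Unset Printing Implicit Defensive.
Import Order.TTheory GRing.Theory Num.Theory.
Local Open Scope ring_scope.
Local Open Scope classical_set_scope.

Definition abs_mx (R : realType) m n (M : 'M[R]_(m, n)) : 'M[R]_(m, n) :=
  map_mx (fun x => `|x|) M.

Definition Dsign (R : realType) n (x : 'cV[R]_n) : 'M[R]_n :=
  \matrix_(i, j) ((i == j)%:R * Num.sg (x i 0)).

Definition ceigenvalue (R : realType) n (M : 'M[R]_n) (l : complex.complex R) :=
  eigenvalue (map_mx (fun x : R => complex.real_complex R x) M) l.

(* spectral radius: largest modulus of a (complex) eigenvalue; sup set0 = 0 *)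
Definition spectral_radius (R : realType) n (M : 'M[R]_n) : R :=
  sup [set complex.ComplexField.Normc.normc l | l in [set l | ceigenvalue M l]].

Fixpoint gen_newton (R : realType) n (A : 'M[R]_n) (b x0 : 'cV[R]_n) (k : nat)
  : 'cV[R]_n :=
  match k with
  | 0 => x0
  | k'.+1 => invmx (A - Dsign (gen_newton A b x0 k')) *m b
  end.

(* Choose c with rho(|A^-1|) < c < 1/3.  The resolvent (t - |A^-1|)^-1 exists
   for t >= c and is entrywise nonnegative there: it is for large t, and
   nonnegativity propagates downwards by continuity.  Hence v := (c - |A^-1|)^-1 1
   is a positive vector with |A^-1| v <= c v, and in the weighted max-norm
   |y|_v := max_i |y_i| / v_i the map A^-1 contracts by c on data dominated in
   absolute value.  Since |D(x) y| <= |y| and ||y| - |z|| <= |y - z|, this gives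
   invertibility of every A - D(x) and uniqueness of the solution.  For the
   Newton errors e_k := |x^(k+1) - x^k|_v one gets (1 - c) e_(k+1) <= 2 c e_k,
   a strict contraction as c < 1/3.  Since x^(k+1) depends only on the sign
   pattern of x^k, some pattern repeats, which forces a zero step; from then on
   the iteration is constant at a solution. *)

From HB Require Import structures.
From mathcomp Require Import all_boot all_order all_algebra.
From mathcomp Require Import all_classical all_reals all_analysis.
From mathcomp Require Import ring lra.
From mathcomp Require complex.
Import complex.ComplexField.
Import Order.TTheory GRing.Theory Num.Theory numFieldNormedType.Exports.
Local Open Scope ring_scope.
Local Open Scope classical_set_scope.
Set Implicit Arguments. Unset Strict Implicit. Unset Printing Implicit Defensive.

Definition l1mx (R : numDomainType) m p (M : 'M[R]_(m, p)) : R :=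
  \sum_i \sum_j `|M i j|.

Definition nonneg_mx (R : numDomainType) m p (M : 'M[R]_(m, p)) :=
  forall i j, 0 <= M i j.

Section EntrywiseL1Norm.
Variables (R : numDomainType) (m p : nat).
Implicit Types M N : 'M[R]_(m, p).

Lemma l1mx_ge0 M : 0 <= l1mx M.
Proof. by apply: sumr_ge0 => i _; apply: sumr_ge0. Qed.

Lemma row_norm_le_l1mx M i : \sum_j `|M i j| <= l1mx M.
Proof.
rewrite /l1mx (bigD1 i) //= lerDl.
by apply: sumr_ge0 => k _; apply: sumr_ge0.
Qed.

Lemma col_norm_le_l1mx M j : \sum_i `|M i j| <= l1mx M.
Proof.
apply: ler_sum => i _; rewrite (bigD1 j) //= lerDl.
exact: sumr_ge0.
Qed.

Lemma l1mxD M N : l1mx (M + N) <= l1mx M + l1mx N.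
Proof.
rewrite /l1mx -big_split; apply: ler_sum => i _.
rewrite -big_split; apply: ler_sum => j _; rewrite mxE; exact: ler_normD.
Qed.

Lemma l1mxZ (a : R) M : l1mx (a *: M) = `|a| * l1mx M.
Proof.
rewrite /l1mx mulr_sumr; apply: eq_bigr => i _; rewrite mulr_sumr.
by apply: eq_bigr => j _; rewrite mxE normrM.
Qed.

End EntrywiseL1Norm.

Lemma l1mxM (R : numDomainType) m p q (M : 'M[R]_(m, p)) (N : 'M[R]_(p, q)) :
  l1mx (M *m N) <= l1mx M * l1mx N.
Proof.
rewrite /l1mx mulr_suml; apply: ler_sum => i _.
apply: (@le_trans _ _ (\sum_j \sum_k `|M i k| * `|N k j|)).
  apply: ler_sum => j _; rewrite mxE.
  apply: le_trans (ler_norm_sum _ _ _) _.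
  by apply: ler_sum => k _; rewrite normrM.
rewrite exchange_big /= mulr_suml; apply: ler_sum => k _.
by rewrite -mulr_sumr ler_wpM2l // (row_norm_le_l1mx N).
Qed.

(* A minimum principle: at a row [k] where column [j] of [X] is minimal,
   [Y k j >= (1 - h * l1mx M) * X k j], which is negative if [X k j] is. *)
Lemma nonneg_solve_1_sub_scale (R : realDomainType) n p (M : 'M[R]_n) (h : R)
    (X Y : 'M[R]_(n, p)) :
  nonneg_mx M -> 0 <= h -> h * l1mx M < 1 ->
  (1%:M - h *: M) *m X = Y -> nonneg_mx Y -> nonneg_mx X.
Proof.
move=> M_ge0 h_ge0 hM_lt1 eXY Y_ge0 i j; rewrite leNgt; apply/negP => Xij_lt0.
have [k _ kmin] := @arg_minP _ _ _ i xpredT (fun k => X k j) isT.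
have Xkj_lt0 : X k j < 0 by apply: le_lt_trans (kmin i isT) Xij_lt0.
have := Y_ge0 k j; rewrite -eXY mulmxBl mul1mx -scalemxAl !mxE.
have MX_ge : (\sum_l M k l) * X k j <= \sum_l M k l * X l j.
  by rewrite mulr_suml; apply: ler_sum => l _; rewrite ler_wpM2l ?kmin.
have rowM_le : \sum_l M k l <= l1mx M.
  apply: le_trans (row_norm_le_l1mx M k); apply: ler_sum => l _; exact: ler_norm.
have l1M_ge0 := l1mx_ge0 M.
have : l1mx M * X k j <= \sum_l M k l * X l j.
  by apply: le_trans MX_ge; rewrite ler_wnM2r // ltW.
nra.
Qed.

Definition resolvent (R : fieldType) n (B : 'M[R]_n) (t : R) : 'M[R]_n :=
  invmx (t%:M - B).

Section Resolvent.
Variables (R : realFieldType) (n : nat) (B : 'M[R]_n).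

Lemma resolvent_eq (t u : R) :
  t%:M - B \in unitmx -> u%:M - B \in unitmx ->
  (1%:M - (t - u) *: resolvent B t) *m resolvent B u = resolvent B t.
Proof.
move=> Ut Uu.
have -> : 1%:M - (t - u) *: resolvent B t = resolvent B t *m (u%:M - B).
  have -> : u%:M - B = (t%:M - B) - (t - u)%:M.
    by apply/matrixP => i j; rewrite !mxE; ring.
  by rewrite mulmxBr mulVmx // mul_mx_scalar.
by rewrite -mulmxA mulmxV // mulmx1.
Qed.

Lemma resolvent_ge0_large (t : R) : nonneg_mx B ->
  l1mx B + 1 <= t -> t%:M - B \in unitmx -> nonneg_mx (resolvent B t).
Proof.
move=> B_ge0 Ht Ut.
have l1B_ge0 := l1mx_ge0 B.
have t_gt0 : 0 < t by lra.
have h_ge0 : 0 <= t^-1 by rewrite invr_ge0 ltW.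
have h_small : t^-1 * l1mx B < 1 by rewrite mulrC ltr_pdivrMr // mul1r; lra.
have id_ge0 : nonneg_mx (1%:M : 'M[R]_n).
  by move=> i j; rewrite mxE; case: (i == j).
have eq_id : (1%:M - t^-1 *: B) *m (t *: resolvent B t) = 1%:M.
  have -> : 1%:M - t^-1 *: B = t^-1 *: (t%:M - B).
    by apply/matrixP => i j; rewrite !mxE; case: (i == j) => /=; field; lra.
  by rewrite -scalemxAl -scalemxAr scalerA mulVf ?gt_eqF // scale1r mulmxV.
have tR_ge0 := nonneg_solve_1_sub_scale B_ge0 h_ge0 h_small eq_id id_ge0.
by move=> i j; have := tR_ge0 i j; rewrite mxE pmulr_rge0.
Qed.

Lemma resolvent_ge0_left (t u : R) :
  t%:M - B \in unitmx -> u%:M - B \in unitmx -> u <= t ->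
  (t - u) * l1mx (resolvent B t) < 1 ->
  nonneg_mx (resolvent B t) -> nonneg_mx (resolvent B u).
Proof.
move=> Ut Uu ut small Rt_ge0.
have d_ge0 : 0 <= t - u by rewrite subr_ge0.
exact: (nonneg_solve_1_sub_scale Rt_ge0 d_ge0 small (resolvent_eq Ut Uu) Rt_ge0).
Qed.

(* Continuity of the resolvent at [u], in quantitative form. *)
Lemma resolvent_l1mx_right (t u : R) :
  t%:M - B \in unitmx -> u%:M - B \in unitmx -> u <= t ->
  2 * (t - u) * l1mx (resolvent B u) < 1 -> (t - u) * l1mx (resolvent B t) < 1.
Proof.
move=> Ut Uu ut small.
have N_ge0 := l1mx_ge0 (resolvent B u); have K_ge0 := l1mx_ge0 (resolvent B t).
have d_ge0 : 0 <= t - u by rewrite subr_ge0.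
have Rt_eq : resolvent B t =
    resolvent B u + (u - t) *: (resolvent B u *m resolvent B t).
  have := resolvent_eq Uu Ut; rewrite mulmxBl mul1mx -scalemxAl => E.
  by apply/eqP; rewrite -subr_eq E.
have : l1mx (resolvent B t) <=
    l1mx (resolvent B u) + (t - u) * (l1mx (resolvent B u) * l1mx (resolvent B t)).
  rewrite {1}Rt_eq; apply: le_trans (l1mxD _ _) _; rewrite lerD2l l1mxZ.
  by rewrite distrC ger0_norm // ler_wpM2l // l1mxM.
nra.
Qed.

End Resolvent.

(* Nonnegativity of the resolvent propagates from large [t] down to [s]: the
   infimum of the [t] beyond which it holds is attained and cannot exceed [s],
   since the resolvent is continuous where it exists. *)
Lemma resolvent_ge0 (R : realType) n (B : 'M[R]_n) (s : R) :
  nonneg_mx B -> (forall t, s <= t -> t%:M - B \in unitmx) ->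
  nonneg_mx (resolvent B s).
Proof.
move=> B_ge0 U.
pose G := [set t | s <= t /\ forall t', t <= t' -> nonneg_mx (resolvent B t')].
have GT : G (Num.max s (l1mx B + 1)).
  split=> [|t' Ht']; first by rewrite le_max lexx.
  have [st' lt'] : s <= t' /\ l1mx B + 1 <= t'.
    by split; apply: le_trans Ht'; rewrite le_max lexx ?orbT.
  exact: resolvent_ge0_large B_ge0 lt' (U t' st').
have G_inf : has_inf G by split; [exists (Num.max s (l1mx B + 1)) | exists s => t []].
pose u := inf G.
have su : s <= u.
  by apply: lb_le_inf => [|t []]; first by exists (Num.max s (l1mx B + 1)).
have inf_le g : G g -> u <= g by move=> Gg; apply: ge_inf => //; exists s => t [].
pose N := l1mx (resolvent B u).
have N_ge0 : 0 <= N := l1mx_ge0 _.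
have eps_gt0 : 0 < (2 * (N + 1))^-1 by rewrite invr_gt0; lra.
have eps_small : forall d, 0 <= d -> d <= (2 * (N + 1))^-1 -> 2 * d * N < 1.
  move=> d d_ge0; rewrite -div1r ler_pdivlMr; last lra.
  by move=> h; nra.
have Ru_ge0 : nonneg_mx (resolvent B u).
  have [g [sg Gg] gu] := inf_adherent eps_gt0 G_inf.
  have ug := inf_le g (conj sg Gg).
  apply: (resolvent_ge0_left (U g sg) (U u su) ug _ (Gg g (lexx g))).
  apply: (resolvent_l1mx_right (U g sg) (U u su) ug).
  by apply: eps_small; rewrite ?subr_ge0 // lerBlDl ltW.
have Gu : G u.
  split=> // t'; rewrite le_eqVlt => /predU1P [<- // | ut'].
  have [g [_ Gg] gt'] := inf_adherent (ltac:(by rewrite subr_gt0) : 0 < t' - u) G_inf.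
  by apply: Gg; rewrite ltW // -(subrK u t') addrC.
suff -> : s = u by [].
apply/eqP; rewrite eq_le su /= leNgt; apply/negP => su'.
pose h := Num.min (u - s) (2 * (N + 1))^-1.
have h_gt0 : 0 < h by rewrite lt_min subr_gt0 su' eps_gt0.
have h_le_us : h <= u - s by rewrite ge_min lexx.
have h_le_eps : h <= (2 * (N + 1))^-1 by rewrite ge_min lexx orbT.
have : G (u - h).
  split=> [|t' Ht']; first lra.
  have [ut' | t'u] := leP u t'; first exact: Gu.2.
  have st' : s <= t' by lra.
  apply: (resolvent_ge0_left (U u su) (U t' st') (ltW t'u) _ (Gu.2 u (lexx u))).
  have : 2 * (u - t') * N < 1 by apply: eps_small; lra.
  have : 0 <= (u - t') * N by apply: mulr_ge0; lra.
  rewrite -/N; nra.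
by move/inf_le; lra.
Qed.

Section ComplexEigenvalues.
Variable R : realType.
Local Notation normc := (@Normc.normc R).

Lemma normc_real (a : R) : normc (complex.real_complex R a) = `|a|.
Proof. by rewrite /Normc.normc /= expr0n /= addr0 sqrtr_sqr. Qed.

Lemma normc_ge0 (z : complex.complex R) : 0 <= normc z.
Proof. by case: z => a b; rewrite /Normc.normc sqrtr_ge0. Qed.

Lemma normc_sum (I : Type) (r : seq I) (F : I -> complex.complex R) :
  normc (\sum_(i <- r) F i) <= \sum_(i <- r) normc (F i).
Proof.
apply: (big_ind2 (fun x y => normc x <= y)); first by rewrite Normc.normc0.
  by move=> x1 x2 y1 y2 h1 h2; apply: le_trans (complex.le_normcD x1 y1) (lerD _ _).
by [].
Qed.

(* Evaluate the eigenvector equation [v B = l v] at a coordinate where [|v|]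
   is maximal. *)
Lemma ceigenvalue_normc_le n (B : 'M[R]_n) l : ceigenvalue B l -> normc l <= l1mx B.
Proof.
move=> /eigenvalueP [v Hv v_neq0].
have [i vi_neq0] : exists i, v 0 i != 0.
  apply/existsP; apply: contraNT v_neq0 => /existsPn v0.
  by apply/eqP/matrixP => a b; rewrite !mxE (ord1 a); exact/eqP/negPn/v0.
have [k _ kmax] := @arg_maxP _ _ _ i xpredT (fun k => normc (v 0 k)) isT.
have vk_gt0 : 0 < normc (v 0 k).
  rewrite lt_neqAle normc_ge0 andbT eq_sym; apply: contra vi_neq0 => /eqP vk0.
  have : normc (v 0 i) <= 0 by rewrite -vk0; exact: kmax.
  by move=> vi_le0; apply/eqP/Normc.eq0_normc/le_anti; rewrite vi_le0 normc_ge0.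
have := congr1 (fun M : 'rV_n => M 0 k) Hv; rewrite !mxE => E.
have : normc l * normc (v 0 k) <= normc (v 0 k) * l1mx B.
  rewrite -Normc.normcM -E; eapply le_trans; first exact: normc_sum.
  apply: (@le_trans _ _ (\sum_j normc (v 0 k) * `|B j k|)).
    apply: ler_sum => j _; rewrite mxE Normc.normcM normc_real.
    by rewrite ler_wpM2r //; exact: kmax.
  by rewrite -mulr_sumr; apply: ler_wpM2l; [exact: ltW | exact: col_norm_le_l1mx].
by rewrite mulrC ler_pM2l.
Qed.

Lemma ceigenvalue_real n (B : 'M[R]_n) (t : R) :
  t%:M - B \notin unitmx -> ceigenvalue B (complex.real_complex R t).
Proof.
rewrite unitmxE unitfE negbK => /det0P [v v_neq0 Hv].
apply/eigenvalueP; exists (map_mx (complex.real_complex R) v); last first.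
  by rewrite map_mx_eq0.
have vB : v *m B = t *: v.
  by move/eqP: Hv; rewrite mulmxBr mul_mx_scalar subr_eq0 => /eqP <-.
rewrite -[map_mx _ B]/(map_mx (complex.real_complex R) B) -map_mxM vB.
by apply/matrixP => a b; rewrite !mxE rmorphM.
Qed.

Lemma unitmx_sub_gt_spectral_radius n (B : 'M[R]_n) (t : R) :
  spectral_radius B < t -> t%:M - B \in unitmx.
Proof.
move=> rho_lt_t; apply: contraT => /ceigenvalue_real t_eig.
have : normc (complex.real_complex R t) <= spectral_radius B.
  apply: sup_upper_bound; last by exists (complex.real_complex R t).
  split; first by eexists; exists (complex.real_complex R t).
  by exists (l1mx B) => x [l Hl <-]; exact: ceigenvalue_normc_le.
by rewrite normc_real; have := ler_norm t; lra.
Qed.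

End ComplexEigenvalues.

(* The weight is [v := (c - B)^-1 1], nonnegative by [resolvent_ge0]; then
   [c v - B v = 1]. *)
Lemma spectral_radius_subinvariant (R : realType) n (B : 'M[R]_n) (r : R) :
  nonneg_mx B -> 0 < r -> spectral_radius B < r ->
  exists c, [/\ 0 < c, c < r & exists2 v : 'cV[R]_n,
    forall i, 0 < v i 0 & forall i, (B *m v) i 0 <= c * v i 0].
Proof.
move=> B_ge0 r_gt0 rho_lt_r.
pose c := (Num.max (spectral_radius B) 0 + r) / 2.
have [c_gt0 c_lt_r rho_lt_c] : [/\ 0 < c, c < r & spectral_radius B < c].
  have rho_le : spectral_radius B <= Num.max (spectral_radius B) 0.
    by rewrite le_max lexx.
  have max_ge0 : 0 <= Num.max (spectral_radius B) 0 by rewrite le_max lexx orbT.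
  have max_lt : Num.max (spectral_radius B) 0 < r by rewrite gt_max rho_lt_r r_gt0.
  by rewrite /c; split; lra.
exists c; split=> //.
have U t : c <= t -> t%:M - B \in unitmx.
  by move=> ct; apply: unitmx_sub_gt_spectral_radius; lra.
have Rc_ge0 := resolvent_ge0 B_ge0 U.
pose v : 'cV[R]_n := resolvent B c *m const_mx 1.
have v_ge0 i : 0 <= v i 0.
  by rewrite mxE; apply: sumr_ge0 => k _; rewrite mxE mulr1 Rc_ge0.
have Bv_ge0 i : 0 <= (B *m v) i 0.
  by rewrite mxE; apply: sumr_ge0 => k _; rewrite mulr_ge0.
have cv_sub_Bv i : c * v i 0 - (B *m v) i 0 = 1.
  have := congr1 (fun M : 'cV[R]_n => M i 0)
    (mulKVmx (U c (lexx c)) (const_mx 1 : 'cV[R]_n)).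
  by rewrite -/(resolvent B c) -/v mulmxBl mul_scalar_mx !mxE.
by exists v => i; have := cv_sub_Bv i; have := v_ge0 i; have := Bv_ge0 i; nra.
Qed.

Definition wnorm (R : realFieldType) n (v y : 'cV[R]_n) : R :=
  \big[Num.max/0]_i (`|y i 0| / v i 0).

Section WeightedMaxNorm.
Variables (R : realFieldType) (n : nat) (v : 'cV[R]_n).
Hypothesis v_gt0 : forall i, 0 < v i 0.
Implicit Type y : 'cV[R]_n.

Lemma wnorm_ge0 y : 0 <= wnorm v y.
Proof.
by rewrite /wnorm; elim/big_rec: _ => // i x _ x_ge0; rewrite le_max x_ge0 orbT.
Qed.

Lemma normr_le_wnorm y i : `|y i 0| <= wnorm v y * v i 0.
Proof.
by rewrite -ler_pdivrMr //; exact: (le_bigmax 0 (fun i => `|y i 0| / v i 0) i).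
Qed.

Lemma wnorm_le y m : 0 <= m -> (forall i, `|y i 0| <= m * v i 0) -> wnorm v y <= m.
Proof. by move=> m_ge0 H; apply: bigmax_le => // i _; rewrite ler_pdivrMr. Qed.

Lemma wnorm_le0 y : wnorm v y <= 0 -> y = 0.
Proof.
move=> y_le0; apply/matrixP => i j; rewrite (ord1 j) mxE; apply/normr0_eq0/le_anti.
have := normr_le_wnorm y i; have := v_gt0 i; have := wnorm_ge0 y.
by rewrite normr_ge0 andbT; nra.
Qed.

End WeightedMaxNorm.

Section Contraction.
Variables (R : realType) (n : nat) (A : 'M[R]_n) (v : 'cV[R]_n) (c : R).
Hypotheses (v_gt0 : forall i, 0 < v i 0) (c_ge0 : 0 <= c).
Hypothesis absinvA_v : forall i, (abs_mx (invmx A) *m v) i 0 <= c * v i 0.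

Lemma normr_invmx_mul_le (y : 'cV[R]_n) (m : R) :
  0 <= m -> (forall j, `|y j 0| <= m * v j 0) ->
  forall i, `|(invmx A *m y) i 0| <= c * m * v i 0.
Proof.
move=> m_ge0 y_le i; rewrite mxE; apply: le_trans (ler_norm_sum _ _ _) _.
apply: (@le_trans _ _ (m * (abs_mx (invmx A) *m v) i 0)); last first.
  by rewrite -mulrA mulrCA ler_wpM2l.
rewrite mxE mulr_sumr; apply: ler_sum => j _; rewrite normrM !mxE mulrCA.
by rewrite ler_wpM2l // mulrC.
Qed.

Lemma wnorm_invmx_contract (y z : 'cV[R]_n) (m : R) :
  0 <= m -> z = invmx A *m y -> (forall j, `|y j 0| <= `|z j 0| + m * v j 0) ->
  wnorm v z * (1 - c) <= c * m.
Proof.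
move=> m_ge0 z_eq y_le.
have z_ge0 := wnorm_ge0 v z.
have : wnorm v z <= c * (wnorm v z + m).
  apply: (wnorm_le v_gt0) => [|i]; first by rewrite mulr_ge0 // addr_ge0.
  rewrite {1}z_eq; apply: normr_invmx_mul_le => [|j].
    by rewrite addr_ge0.
  by apply: le_trans (y_le j) _; rewrite mulrDl lerD2r normr_le_wnorm.
nra.
Qed.

Lemma invmx_contract_eq0 (y z : 'cV[R]_n) :
  c < 1 -> z = invmx A *m y -> (forall j, `|y j 0| <= `|z j 0|) -> z = 0.
Proof.
move=> c_lt1 z_eq y_le; apply: (wnorm_le0 v_gt0).
have : wnorm v z * (1 - c) <= c * 0.
  by apply: wnorm_invmx_contract z_eq _ => // j; rewrite mul0r addr0.
by have := wnorm_ge0 v z; nra.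
Qed.

End Contraction.

Lemma nat_fun_repeat (T : finType) (f : nat -> T) :
  exists i j, (i < j)%N /\ f i = f j.
Proof.
have : ~~ injectiveb (fun k : 'I_#|T|.+1 => f k).
  by apply/negP => /injectiveP /leq_card; rewrite card_ord ltnn.
case/injectivePn => i [j] ij fij.
case: (ltngtP i j) => [ij'|ji|/val_inj eij]; first by exists i, j.
  by exists j, i.
by rewrite eij eqxx in ij.
Qed.

Lemma Dsign_mulmx (R : realType) n (x w : 'cV[R]_n) i :
  (Dsign x *m w) i 0 = Num.sg (x i 0) * w i 0.
Proof.
rewrite mxE (bigD1 i) //= !mxE eqxx mul1r big1 ?addr0 // => j ji.
by rewrite !mxE eq_sym (negbTE ji) !mul0r.
Qed.

Lemma Dsign_mulmx_self (R : realType) n (x : 'cV[R]_n) : Dsign x *m x = abs_mx x.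
Proof. by apply/matrixP => i j; rewrite (ord1 j) Dsign_mulmx mxE normrEsg. Qed.

Lemma normr_Dsign_mulmx_le (R : realType) n (x w : 'cV[R]_n) i :
  `|(Dsign x *m w) i 0| <= `|w i 0|.
Proof.
by rewrite Dsign_mulmx normrM normr_sg; case: (_ != 0); rewrite ?mul1r ?mul0r.
Qed.

Lemma normr_sgrM_sub_le (R : realDomainType) (a a' b : R) :
  `|Num.sg a * a' - Num.sg b * a| <= `|a' - a| + 2 * `|a - b|.
Proof.
have := ler_norm (a' - a); have := ler_norm (a - b).
have := ler_norm (- (a' - a)); have := ler_norm (- (a - b)).
rewrite !normrN ler_norml.
by case: (ltrgt0P a) => a0; case: (ltrgt0P b) => b0; try subst;
  rewrite ?sgr0 ?(gtr0_sg a0) ?(ltr0_sg a0) ?(gtr0_sg b0) ?(ltr0_sg b0) => *;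
  apply/andP; split; lra.
Qed.

Definition sign_pattern (R : realType) n (x : 'cV[R]_n) :
  {ffun 'I_n -> bool * bool} :=
  [ffun i => (0 < x i 0, x i 0 < 0)].

Lemma Dsign_sign_pattern (R : realType) n (x y : 'cV[R]_n) :
  sign_pattern x = sign_pattern y -> Dsign x = Dsign y.
Proof.
move=> /ffunP xy; apply/matrixP => i j; rewrite !mxE; congr (_ * _).
move: (xy i); rewrite !ffunE => -[].
by case: (ltrgt0P (x i 0)) => xi; case: (ltrgt0P (y i 0)) => yi //= _ _;
  rewrite ?xi ?yi ?sgr0 ?(gtr0_sg xi) ?(ltr0_sg xi) ?(gtr0_sg yi) ?(ltr0_sg yi).
Qed.

Section GeneralizedNewton.
Variables (R : realType) (n : nat) (A : 'M[R]_n) (v : 'cV[R]_n) (c : R).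
Hypotheses (A_unit : A \in unitmx) (v_gt0 : forall i, 0 < v i 0).
Hypotheses (c_ge0 : 0 <= c) (c_lt : c < 1 / 3).
Hypothesis absinvA_v : forall i, (abs_mx (invmx A) *m v) i 0 <= c * v i 0.

Let c_lt1 : c < 1. Proof. by move: c_lt; lra. Qed.

Lemma unitmx_sub_Dsign (x : 'cV[R]_n) : A - Dsign x \in unitmx.
Proof.
apply: contraT; rewrite unitmxE unitfE negbK -det_tr => /det0P [u u_neq0 uA].
have u_eq : u^T = invmx A *m (Dsign x *m u^T).
  have : A *m u^T = Dsign x *m u^T.
    apply/eqP; rewrite -subr_eq0 -mulmxBl.
    by rewrite -[X in X == 0]trmxK trmx_mul trmxK uA trmx0.
  by move=> <-; rewrite mulKmx.
have := invmx_contract_eq0 v_gt0 c_ge0 absinvA_v c_lt1 u_eq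
  (normr_Dsign_mulmx_le x u^T).
by move/eqP; rewrite trmx_eq0 (negbTE u_neq0).
Qed.

Lemma abs_eq_sol_uniq (b y1 y2 : 'cV[R]_n) :
  A *m y1 - abs_mx y1 = b -> A *m y2 - abs_mx y2 = b -> y1 = y2.
Proof.
move=> y1_sol y2_sol; apply/eqP; rewrite -subr_eq0; apply/eqP.
apply: (invmx_contract_eq0 v_gt0 c_ge0 absinvA_v c_lt1 (y := abs_mx y1 - abs_mx y2)).
- apply/(canRL (mulKmx A_unit)); rewrite mulmxBr.
  rewrite -[A *m y1](subrK (abs_mx y1)) -[A *m y2](subrK (abs_mx y2)).
  by rewrite y1_sol y2_sol opprD addrACA subrr add0r.
- by move=> j; rewrite !mxE ler_dist_dist.
Qed.

Variables b x0 : 'cV[R]_n.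
Local Notation x := (gen_newton A b x0).
Local Notation err k := (wnorm v (x k.+1 - x k)).

Lemma gen_newton_eq k : A *m x k.+1 - Dsign (x k) *m x k.+1 = b.
Proof. by rewrite -mulmxBl /= mulmxA mulmxV ?mul1mx // unitmx_sub_Dsign. Qed.

Lemma gen_newton_err_contract k : err k.+1 * (1 - c) <= c * (2 * err k).
Proof.
have step : x k.+2 - x k.+1 =
    invmx A *m (Dsign (x k.+1) *m x k.+2 - Dsign (x k) *m x k.+1).
  apply/(canRL (mulKmx A_unit)); rewrite mulmxBr.
  rewrite -[A *m x k.+2](subrK (Dsign (x k.+1) *m x k.+2)).
  rewrite -[A *m x k.+1](subrK (Dsign (x k) *m x k.+1)) !gen_newton_eq.
  by rewrite opprD addrACA subrr add0r.
apply: (wnorm_invmx_contract v_gt0 c_ge0 absinvA_v _ step) => [|j].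
  by rewrite mulr_ge0 // wnorm_ge0.
have -> : (Dsign (x k.+1) *m x k.+2 - Dsign (x k) *m x k.+1) j 0 =
    Num.sg (x k.+1 j 0) * x k.+2 j 0 - Num.sg (x k j 0) * x k.+1 j 0.
  by rewrite -!Dsign_mulmx !mxE.
have := normr_le_wnorm v_gt0 (x k.+1 - x k) j.
rewrite !mxE => err_j.
by apply: le_trans (normr_sgrM_sub_le _ _ _) _; lra.
Qed.

Lemma gen_newton_err_nonincr k : err k.+1 <= err k.
Proof.
have err_ge0 := wnorm_ge0 v (x k.+1 - x k).
have : 2 * c * err k <= (1 - c) * err k by rewrite ler_wpM2r //; move: c_lt; lra.
have := gen_newton_err_contract k; have := wnorm_ge0 v (x k.+2 - x k.+1).
by move: c_lt; nra.
Qed.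

Lemma gen_newton_err_le k l : (k <= l)%N -> err l <= err k.
Proof.
move/subnKC <-; elim: (l - k)%N => [|p IHp]; first by rewrite addn0.
by rewrite addnS; apply: le_trans (gen_newton_err_nonincr _) IHp.
Qed.

Lemma gen_newton_succ_sign_pattern k l :
  sign_pattern (x k) = sign_pattern (x l) -> x k.+1 = x l.+1.
Proof. by move/Dsign_sign_pattern => /= ->. Qed.

(* Two iterates with the same sign pattern have the same successors, so the
   errors after them agree; with a strict contraction this forces a zero step. *)
Lemma gen_newton_stationary : exists K, x K.+1 = x K.
Proof.
have [J [L [JL xJL]]] := nat_fun_repeat (fun k => sign_pattern (x k)).
have x1 := gen_newton_succ_sign_pattern xJL.
have x2 : x J.+2 = x L.+2 by apply: gen_newton_succ_sign_pattern; rewrite x1.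
have err_eq : err J.+1 = err L.+1 by rewrite x1 x2.
have err_le : err J.+1 <= err J.+2 by rewrite err_eq gen_newton_err_le.
have := gen_newton_err_contract J.+1; have := wnorm_ge0 v (x J.+2 - x J.+1).
move=> err_ge0 contract; exists J.+1.
apply/eqP; rewrite -subr_eq0; apply/eqP/(wnorm_le0 v_gt0).
by move: c_lt; nra.
Qed.

Lemma gen_newton_stationary_sol :
  exists K, A *m x K - abs_mx (x K) = b /\ forall k, (K <= k)%N -> x k = x K.
Proof.
have [K xK] := gen_newton_stationary.
have x_const p : x (K + p)%N = x K.
  elim: p => [|p IHp]; first by rewrite addn0.
  by rewrite addnS -xK; apply: gen_newton_succ_sign_pattern; rewrite IHp.
exists K; split; last by move=> k /subnKC <-.
by rewrite -Dsign_mulmx_self -{1 3}xK gen_newton_eq.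
Qed.

End GeneralizedNewton.

Theorem theorem3p7 (R : realType) (n : nat) (A : 'M[R]_n) :
  A \in unitmx ->
  spectral_radius (abs_mx (invmx A)) < 1 / 3 ->
  forall b x0 : 'cV[R]_n,
    (forall k : nat, A - Dsign (gen_newton A b x0 k) \in unitmx) /\
    exists2 xs : 'cV[R]_n,
      (A *m xs - abs_mx xs = b /\
       forall y : 'cV[R]_n, A *m y - abs_mx y = b -> y = xs) &
      forall i : 'I_n, (fun k => gen_newton A b x0 k i 0) @ \oo --> xs i 0.
Proof.
move=> A_unit rho_lt b x0.
have absinvA_ge0 : nonneg_mx (abs_mx (invmx A)) by move=> i j; rewrite mxE.
have [c [c_gt0 c_lt [v v_gt0 absinvA_v]]] :=
  spectral_radius_subinvariant absinvA_ge0 (ltac:(lra) : 0 < 1 / 3) rho_lt.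
have c_ge0 := ltW c_gt0.
have unit_sub := unitmx_sub_Dsign A_unit v_gt0 c_ge0 c_lt absinvA_v.
have sol_uniq := abs_eq_sol_uniq A_unit v_gt0 c_ge0 c_lt absinvA_v.
have [K [K_sol K_const]] :=
  gen_newton_stationary_sol A_unit v_gt0 c_ge0 c_lt absinvA_v b x0.
split=> [k|]; first exact: unit_sub.
exists (gen_newton A b x0 K).
  by split=> // y y_sol; apply: sol_uniq y_sol K_sol.
by move=> i; apply: cvg_near_cst; exists K => // k /= Kk; rewrite K_const.
Qed.
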